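(* If $S\subseteq\{0,1,2\}^m$ and $T\subseteq\{0,1,2\}^{m'}$ are admissible sets, then their direct product $S\times T=\{(s,t): s\in S,t\in T\}\subseteq\{0,1,2\}^{m+m'}$ (with $(s,t)$ the concatenation of $s$ and $t$) is an admissible set.
   Context: A set $S\subseteq\{0,1,2\}^m$ is admissible if (1) for all distinct $s,s'\in S$ there are coordinates $i,j$ with $s_i=0\neq s'_i$ and $s_j\neq 0=s'_j$; and (2) for all distinct $s,s',s''\in S$ there is a coordinate $k$ such that the multiset $\{s_k,s'_k,s''_k\}$ equals $\{0,1,2\}$, $\{0,0,1\}$ or $\{0,0,2\}$. *)

From mathcomp Require Import all_boot.
Set Implicit Arguments. Unset Strict Implicit. Unset Printing Implicit Defensive.

Definition good_triple (a b c : 'I_3) : bool :=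
  perm_eq [:: val a; val b; val c] [:: 0; 1; 2]
  || perm_eq [:: val a; val b; val c] [:: 0; 0; 1]
  || perm_eq [:: val a; val b; val c] [:: 0; 0; 2].

Definition admissible (m : nat) (S : {set m.-tuple 'I_3}) : Prop :=
  (forall s s', s \in S -> s' \in S -> s != s' ->
     (exists i : 'I_m, val (tnth s i) == 0 /\ val (tnth s' i) != 0) /\
     (exists j : 'I_m, val (tnth s j) != 0 /\ val (tnth s' j) == 0))
  /\
  (forall s s' s'', s \in S -> s' \in S -> s'' \in S ->
     s != s' -> s != s'' -> s' != s'' ->
     exists k : 'I_m, good_triple (tnth s k) (tnth s' k) (tnth s'' k)).

Definition prod_set (m m' : nat) (S : {set m.-tuple 'I_3}) (T : {set m'.-tuple 'I_3})
  : {set (m + m').-tuple 'I_3} :=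
  [set cat_tuple st.1 st.2 | st in [set x | (x.1 \in S) && (x.2 \in T)]].

From mathcomp Require Import all_boot.
Set Implicit Arguments. Unset Strict Implicit. Unset Printing Implicit Defensive.

(* If the S-components of two or three elements of S x T are not all equal,
   a witness coordinate for S, read in the first block, serves for S x T;
   otherwise the T-components are pairwise distinct and a witness for T, read
   in the second block, serves.  The only point needing care is a triple whose
   S-components are two equal words s and one word s'' distinct from s: the
   pair condition for S gives a coordinate where s reads 0 and s'' does not,
   i.e. a column with multiset {0,0,1} or {0,0,2}. *)

Definition zero_separated (m : nat) (S : {set m.-tuple 'I_3}) : Prop :=
  forall s s', s \in S -> s' \in S -> s != s' ->
    (exists i : 'I_m, val (tnth s i) == 0 /\ val (tnth s' i) != 0) /\
    (exists j : 'I_m, val (tnth s j) != 0 /\ val (tnth s' j) == 0).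

Definition triples_good (m : nat) (S : {set m.-tuple 'I_3}) : Prop :=
  forall s s' s'', s \in S -> s' \in S -> s'' \in S ->
    s != s' -> s != s'' -> s' != s'' ->
    exists k : 'I_m, good_triple (tnth s k) (tnth s' k) (tnth s'' k).

Lemma admissibleE (m : nat) (S : {set m.-tuple 'I_3}) :
  admissible S <-> zero_separated S /\ triples_good S.
Proof. by []. Qed.

Lemma good_triple_zero_pair (a b : 'I_3) :
  val a == 0 -> val b != 0 ->
  [/\ good_triple a a b, good_triple a b a & good_triple b a a].
Proof. by case: a b => [[|[|[|?]]] ?] [[|[|[|?]]] ?]. Qed.

Lemma admissible_triple_not_constant (m : nat) (S : {set m.-tuple 'I_3}) s s' s'' :
  admissible S -> s \in S -> s' \in S -> s'' \in S -> (s != s') || (s != s'') ->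
  exists k : 'I_m, good_triple (tnth s k) (tnth s' k) (tnth s'' k).
Proof.
case=> sepS goodS Ss Ss' Ss''.
have zero_pair x y : x \in S -> y \in S -> x != y ->
    exists i, val (tnth x i) == 0 /\ val (tnth y i) != 0.
  by move=> Sx Sy xy; case: (sepS x y Sx Sy xy).
have [<- /= ss''|ss' _] := eqVneq s s'.
  have [i [si s''i]] := zero_pair s s'' Ss Ss'' ss''.
  by exists i; case: (good_triple_zero_pair si s''i).
have [<-|ss''] := eqVneq s s''.
  have [i [si s'i]] := zero_pair s s' Ss Ss' ss'.
  by exists i; case: (good_triple_zero_pair si s'i).
have [<-|s's''] := eqVneq s' s''; last exact: goodS.
rewrite eq_sym in ss'.
have [i [s'i si]] := zero_pair s' s Ss' Ss ss'.
by exists i; case: (good_triple_zero_pair s'i si).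
Qed.

Lemma prod_set_cat (m m' : nat) (S : {set m.-tuple 'I_3})
    (T : {set m'.-tuple 'I_3}) u :
  u \in prod_set S T -> exists s t, [/\ s \in S, t \in T & u = cat_tuple s t].
Proof. by case/imsetP=> -[s t]; rewrite inE => /andP[Ss Tt] ->; exists s, t. Qed.

Section DirectProduct.

Variables (m m' : nat) (S : {set m.-tuple 'I_3}) (T : {set m'.-tuple 'I_3}).

Lemma zero_separated_prod :
  zero_separated S -> zero_separated T -> zero_separated (prod_set S T).
Proof.
move=> sepS sepT _ _ /prod_set_cat[s [t [Ss Tt ->]]]
  /prod_set_cat[s' [t' [Ss' Tt' ->]]].
have [<- neq|ss' _] := eqVneq s s'.
  have tt' : t != t' by apply: contraNneq neq => ->.
  have [[i [ti t'i]] [j [tj t'j]]] := sepT t t' Tt Tt' tt'.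
  by split; [exists (rshift m i) | exists (rshift m j)]; rewrite !tnth_rshift.
have [[i [si s'i]] [j [sj s'j]]] := sepS s s' Ss Ss' ss'.
by split; [exists (lshift m' i) | exists (lshift m' j)]; rewrite !tnth_lshift.
Qed.

Lemma triples_good_prod :
  admissible S -> admissible T -> triples_good (prod_set S T).
Proof.
move=> admS [_ goodT] _ _ _ /prod_set_cat[s [t [Ss Tt ->]]]
  /prod_set_cat[s' [t' [Ss' Tt' ->]]] /prod_set_cat[s'' [t'' [Ss'' Tt'' ->]]].
have [/andP[/eqP <- /eqP <-]|not_const] := boolP ((s == s') && (s == s'')).
  move=> neq' neq'' neq'''.
  have tt' : t != t' by apply: contraNneq neq' => ->.
  have tt'' : t != t'' by apply: contraNneq neq'' => ->.
  have t't'' : t' != t'' by apply: contraNneq neq''' => ->.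
  have [k good_k] := goodT t t' t'' Tt Tt' Tt'' tt' tt'' t't''.
  by exists (rshift m k); rewrite !tnth_rshift.
move=> _ _ _; rewrite negb_and in not_const.
have [k good_k] := admissible_triple_not_constant admS Ss Ss' Ss'' not_const.
by exists (lshift m' k); rewrite !tnth_lshift.
Qed.

End DirectProduct.

Theorem proposition3p1 (m m' : nat) (S : {set m.-tuple 'I_3}) (T : {set m'.-tuple 'I_3}) :
  admissible S -> admissible T -> admissible (prod_set S T).
Proof.
move=> admS admT; apply/admissibleE; split; last exact: triples_good_prod.
by apply: zero_separated_prod; [case: admS | case: admT].
Qed.
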